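(* Let $K$ be a field of characteristic $0$, $n\ge2$, and $f\in K[[x_1,\dots,x_n]]$. Let $T=x_1D_{x_1}-x_2D_{x_2}$ act on $K[[x_1,\dots,x_n]]$ with $D_{x_i}=\partial/\partial x_i$. Then there exists $s\in\mathbb N$ with $T^s(f)=0$ if and only if there exists a power series $g\in K[[y_1,\dots,y_{n-1}]]$ in $n-1$ variables such that $f(x_1,\dots,x_n)=g(x_1x_2,x_3,\dots,x_n)$. *)

From mathcomp Require Import all_boot all_order all_algebra.
Set Implicit Arguments. Unset Strict Implicit. Unset Printing Implicit Defensive.
Import GRing.Theory.
Local Open Scope ring_scope.

(* Formal power series in n variables x_0,...,x_{n-1} over K, represented
   by their coefficient function on exponent vectors (monomials). *)
Definition mon (n : nat) := {ffun 'I_n -> nat}.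
Definition fps (K : fieldType) (n : nat) := mon n -> K.

Definition mon_inc n (a : mon n) (i : 'I_n) : mon n := [ffun j => a j + (j == i)]%N.
Definition mon_dec n (a : mon n) (i : 'I_n) : mon n := [ffun j => a j - (j == i)]%N.

Definition fps0 (K : fieldType) (n : nat) : fps K n := fun _ => 0.

Definition fps_deriv (K : fieldType) n (i : 'I_n) (f : fps K n) : fps K n :=
  fun a => (a i).+1%:R * f (mon_inc a i).

Definition fps_mulX (K : fieldType) n (i : 'I_n) (f : fps K n) : fps K n :=
  fun a => if (0 < a i)%N then f (mon_dec a i) else 0.

Definition fps_sub (K : fieldType) n (f g : fps K n) : fps K n := fun a => f a - g a.

(* T = x_1 D_{x_1} - x_2 D_{x_2}  (x_1, x_2 are the indices ord0, 1) *)
Definition opT (K : fieldType) m (f : fps K m.+2) : fps K m.+2 :=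
  fps_sub (fps_mulX ord0 (fps_deriv ord0 f))
          (fps_mulX (lift ord0 ord0) (fps_deriv (lift ord0 ord0) f)).

(* g(x_1 x_2, x_3, ..., x_n) for g in n-1 = m+1 variables y_1..y_{m+1}:
   sum_b g_b (x1 x2)^{b_1} x3^{b_2} ... ; its coefficient at x^a is
   g_(a_1, a_3, ..., a_n) if a_1 = a_2 and 0 otherwise. *)
Definition subst_x1x2 (K : fieldType) m (g : fps K m.+1) : fps K m.+2 :=
  fun a => if a ord0 == a (lift ord0 ord0)
           then g [ffun j : 'I_m.+1 => if j == ord0 then a ord0 else a (lift ord0 j)]
           else 0.
Arguments fps0 K n _ : clear implicits.

From mathcomp Require Import all_boot all_order all_algebra.
From Stdlib Require Import FunctionalExtensionality.
Set Implicit Arguments.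
Unset Strict Implicit.

Local Open Scope ring_scope.
Import GRing.Theory.

(* Each Euler operator x_i D_{x_i} acts diagonally on monomials, with
   eigenvalue a_i on x^a; hence T multiplies the coefficient of x^a by
   a_1 - a_2, and T^s by (a_1 - a_2)^s.  In characteristic 0 this factor is
   nonzero exactly off the diagonal a_1 = a_2, so T is nilpotent on f iff f
   only involves monomials in which x_1 and x_2 occur to the same power, i.e.
   iff f is a power series in x_1 x_2, x_3, ..., x_n. *)

Lemma subr_natr_eq0 (R : idomainType) (x y : nat) :
  [pchar R] =i pred0 -> ((x%:R - y%:R : R) == 0) = (x == y).
Proof.
move=> charR; wlog le_xy : x y / (x <= y)%N => [wlog_le|].
  case/orP: (leq_total x y) => [/wlog_le //|/wlog_le yx].
  by rewrite -oppr_eq0 opprB yx eq_sym.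
rewrite -opprB -natrB // oppr_eq0 ((pcharf0P R).1 charR) subn_eq0.
by rewrite eqn_leq le_xy.
Qed.

Section EulerOperator.

Variables (K : fieldType) (n : nat).
Implicit Types (f : fps K n) (a : mon n) (i : 'I_n).

Lemma mon_decK a i : (0 < a i)%N -> mon_inc (mon_dec a i) i = a.
Proof.
move=> a_i_gt0; apply/ffunP => j; rewrite !ffunE.
by case: (eqVneq j i) => [->|_]; rewrite ?subnK ?subn0 ?addn0.
Qed.

Lemma fps_mulX_derivE f i a : fps_mulX i (fps_deriv i f) a = (a i)%:R * f a.
Proof.
rewrite /fps_mulX /fps_deriv; case: (posnP (a i)) => [->|a_i_gt0].
  by rewrite mul0r.
by rewrite mon_decK // ffunE eqxx subn1 prednK.
Qed.

End EulerOperator.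

Section OperatorT.

Variables (K : fieldType) (m : nat).
Implicit Types (f : fps K m.+2) (a : mon m.+2).

Local Notation x1 := (ord0 : 'I_m.+2).
Local Notation x2 := (lift ord0 ord0 : 'I_m.+2).

Lemma opTE f a : opT f a = ((a x1)%:R - (a x2)%:R) * f a.
Proof. by rewrite /opT /fps_sub !fps_mulX_derivE mulrBl. Qed.

Lemma iter_opTE s f a :
  iter s (@opT K m) f a = ((a x1)%:R - (a x2)%:R) ^+ s * f a.
Proof.
elim: s => [|s IHs] /=; first by rewrite expr0 mul1r.
by rewrite opTE IHs mulrA -exprS.
Qed.

Definition diag_supported f := forall a, a x1 != a x2 -> f a = 0.

Lemma opT_nilpotentP f : [pchar K] =i pred0 ->
  (exists s, iter s (@opT K m) f = fps0 K m.+2) <-> diag_supported f.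
Proof.
move=> charK; split => [[s Tsf0] a a12|f_diag].
  have /eqP := congr1 (fun h => h a) Tsf0.
  rewrite iter_opTE mulf_eq0 expf_eq0 subr_natr_eq0 // (negbTE a12) andbF.
  by move/eqP.
exists 1%N; apply: functional_extensionality => a /=; rewrite opTE.
have [->|a12] := eqVneq (a x1) (a x2); first by rewrite subrr mul0r.
by rewrite f_diag ?mulr0.
Qed.

(* On the diagonal, [subst_x1x2 g a] is [g (mon_merge a)]; [mon_split] gives
   both x_1 and x_2 the exponent of y_1. *)
Definition mon_merge a : mon m.+1 :=
  [ffun j => if j == ord0 then a x1 else a (lift ord0 j)].

Definition mon_split (b : mon m.+1) : mon m.+2 :=
  [ffun i => b (odflt ord0 (unlift ord0 i))].

Lemma mon_mergeK a : a x1 = a x2 -> mon_split (mon_merge a) = a.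
Proof.
move=> a12; apply/ffunP => i; rewrite !ffunE.
case: unliftP => [j ->|->] //=.
by case: eqP => [->|].
Qed.

Lemma subst_x1x2P f : (exists g, f = subst_x1x2 g) <-> diag_supported f.
Proof.
split => [[g ->] a a12|f_diag]; first by rewrite /subst_x1x2 (negbTE a12).
exists (f \o mon_split); apply: functional_extensionality => a.
rewrite /subst_x1x2 /=; have [a12|a12] := eqVneq (a x1) (a x2).
  by rewrite -[X in mon_split X]/(mon_merge a) mon_mergeK.
exact: f_diag.
Qed.

End OperatorT.

(* n = m.+2 variables, i.e. n >= 2 *)
Theorem lemma3p7 (K : fieldType) (m : nat) (charK : [pchar K] =i pred0)
  (f : fps K m.+2) :
  (exists s : nat, iter s (@opT K m) f = fps0 K m.+2) <->
  (exists g : fps K m.+1, f = subst_x1x2 g).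
Proof.
exact: iff_trans (opT_nilpotentP f charK) (iff_sym (subst_x1x2P f)).
Qed.
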